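(* Let $(X_t)_{t\ge1}$ be a strictly stationary time series with continuous stationary distribution function $F$, and let $M_m=\max(X_1,\dots,X_m)$. Let $\gamma\in\mathbb{R}$, $\rho\le 0$, $\theta\in(0,1]$, and let $b(t)=Q(e^{-1/t})$ for $t>1$, where $Q$ is the generalized inverse of $F$. Assume that there exist a positive function $a(\cdot)$ and a function $A(\cdot)$ of eventually constant sign with $A(s)\to0$ as $s\to\infty$ such that for all $x>0$ $$\lim_{s\to\infty}\frac{1}{A(s)}\left(\frac{b(sx)-b(s)}{a(s)}-\int_1^x u^{\gamma-1}\,du\right)=\mathcal{H}_{\gamma,\rho}(x):=\int_1^x v^{\gamma-1}\int_1^v u^{\rho-1}\,du\,dv,$$ and that, for integer sequences $m=m_n\to\infty$ and $k=k_n\to\infty$, $\sqrt{k}A(m)\to\lambda\in\mathbb{R}$ as $n\to\infty$. Define $a_\theta(m)=a(m)\theta^\gamma$ and $b_\theta(m)=b(m)+a(m)(\theta^\gamma-1)/\gamma$ (with $(\theta^\gamma-1)/\gamma=\log\theta$ if $\gamma=0$). Then, as $n\to\infty$, $$\sqrt{k}\left(\frac{a_\theta(m)}{a(\theta m)}-1\right)=-\lambda\frac{\theta^\rho-1}{\rho}+o(1),$$ $$\sqrt{k}\,\frac{b_\theta(m)-b(\theta m)}{a(\theta m)}=\lambda\theta^\rho\mathcal{H}_{\gamma,\rho}(\theta^{-1})+\lambda\frac{\theta^\rho-1}{\rho}\,\frac{\theta^{-\gamma}-1}{\gamma}+o(1),$$ (with $(\theta^\rho-1)/\rho=\log\theta$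 if $\rho=0$). Moreover, if in addition $\lim_{m\to\infty}\mathbb{P}(M_m\le a_\theta(m)z+b_\theta(m))=G_\gamma(z)$ for all $z$ (which holds when $F$ is in the max-domain of attraction of $G_\gamma$ and the series has extremal index $\theta$), then for all $z$, $$\lim_{n\to\infty}\mathbb{P}\big(M_m\le a(\theta m)z+b(\theta m)\big)=G_\gamma(z).$$
   Context: $G_\gamma(z)=\exp(-(1+\gamma z)_+^{-1/\gamma})$ is the generalized extreme value (GEV) distribution function ($G_0(z)=\exp(-e^{-z})$), with $(x)_+=\max(0,x)$. The generalized inverse is $Q(\tau)=\inf\{x: F(x)\ge\tau\}$. A series has extremal index $\theta\in(0,1]$ if for every $x>0$ and every sequence $u_m$ with $m(1-F(u_m))\to x$ one has $\mathbb{P}(M_m\le u_m)\to e^{-\theta x}$. *)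

From HB Require Import structures.
From mathcomp Require Import all_boot all_order all_algebra.
From mathcomp Require Import all_classical all_reals all_analysis.
Set Implicit Arguments. Unset Strict Implicit. Unset Printing Implicit Defensive.
Import Order.TTheory GRing.Theory Num.Theory.
Import numFieldNormedType.Exports.
Local Open Scope classical_set_scope.
Local Open Scope ring_scope.

Section Defs.
Context {R : realType}.

Definition oint (f : R -> R) (a b : R) : R :=
  if a <= b then Rintegral lebesgue_measure `[a, b] f
  else - Rintegral lebesgue_measure `[b, a] f.

Definition h_int (g x : R) : R := oint (fun u => u `^ (g - 1)) 1 x.

Definition Hgr (g r x : R) : R :=
  oint (fun v => v `^ (g - 1) * oint (fun u => u `^ (r - 1)) 1 v) 1 x.

Definition hpow (g x : R) : R := if g == 0 then ln x else (x `^ g - 1) / g.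

(* GEV distribution function G_g(z) = exp(-(1+g z)_+^(-1/g)), G_0 = exp(-e^{-z});
   with the conventions 0^(-1/g) = +oo for g > 0 (G = 0) and 0 for g < 0 (G = 1). *)
Definition GEV (g z : R) : R :=
  if g == 0 then expR (- expR (- z))
  else if 0 < 1 + g * z then expR (- ((1 + g * z) `^ (- g^-1)))
  else if 0 < g then 0 else 1.

Definition geninv (F : R -> R) (tau : R) : R := inf [set x | tau <= F x].

Context {d : measure_display} {T : measurableType d}.

(* M_m = max(X_1, ..., X_m) (time indices start at 1; X 0 is unused) *)
Definition Mmax (X : nat -> T -> R) (m : nat) (w : T) : R :=
  \big[Num.max/X 1%N w]_(1 <= i < m.+1) X i w.

(* strict stationarity: all finite-dimensional distributions of
   (X_{1+h}, ..., X_{n+h}) coincide with those of (X_1, ..., X_n),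
   tested on measurable rectangles (which determine the joint law) *)
Definition strictly_stationary (P : probability T R) (X : nat -> T -> R) :=
  forall (n h : nat) (B : nat -> set R), (forall i, measurable (B i)) ->
    P [set w | forall i, (i < n)%N -> B i (X (i.+1 + h)%N w)] =
    P [set w | forall i, (i < n)%N -> B i (X i.+1 w)].

Definition stat_cdf (P : probability T R) (X : nat -> T -> R) (x : R) : R :=
  fine (P [set w | X 1%N w <= x]).

End Defs.

(* By the fundamental theorem of calculus h_gam(x) = (x^gam - 1)/gam and H_{gam,rho}
   have closed forms satisfying cocycle identities in x.  Expanding b(s x z) - b(s)
   once at s and once at s x therefore gives, for every z > 0, a linear equation in
   the two unknowns (a(s x)/a(s) - x^gam)/A(s) and a(s x) A(s x) / (a(s) A(s)); two
   values of z with nonzero determinant force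
     (a(s x)/a(s) - x^gam)/A(s) --> x^gam (x^rho - 1)/rho.
   With x = theta, multiplying by sqrt(k) A(m) --> lam gives both rates.  They also
   show a_th(m)/a(theta m) --> 1 and (b_th(m) - b(theta m))/a(theta m) --> 0, and the
   limit law transfers to the new normalization because distribution functions are
   nondecreasing and G_gam is continuous (convergence of types). *)

From HB Require Import structures.
From mathcomp Require Import all_boot all_order all_algebra.
From mathcomp Require Import all_classical all_reals all_analysis.
From mathcomp Require Import ring lra.
Import Order.TTheory GRing.Theory Num.Theory.
Import numFieldNormedType.Exports.
Local Open Scope classical_set_scope.
Local Open Scope ring_scope.

Section closed_forms.
Context {R : realType}.
Implicit Types (f F : R -> R) (c g r x y : R).

Lemma is_derive_continuous [F y l] : is_derive y 1 F l -> {for y, continuous F}.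
Proof.
by case=> dF _; apply/differentiable_continuous; rewrite -derivable1_diffP.
Qed.

Lemma Rintegral_itv_FTC [f F a b] : a < b ->
  (forall y, a <= y <= b -> is_derive y 1 F (f y)) ->
  (forall y, a <= y <= b -> {for y, continuous f}) ->
  Rintegral lebesgue_measure `[a, b] f = F b - F a.
Proof.
move=> ab dF cf; have aab : a <= a <= b by rewrite lexx ltW.
have bab : a <= b <= b by rewrite lexx ltW.
rewrite /Rintegral (@continuous_FTC2 _ _ F _ _ ab).
- by [].
- apply: continuous_in_subspaceT => y; rewrite inE /= in_itv /=; exact: cf.
- split.
  + by move=> y; rewrite in_itv /= => /andP[ay yb]; case: (dF y); rewrite ?ltW.
  + exact: cvg_at_right_filter (is_derive_continuous (dF a aab)).
  + exact: cvg_at_left_filter (is_derive_continuous (dF b bab)).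
- move=> y; rewrite in_itv /= => /andP[ay yb].
  by rewrite derive1E; case: (dF y); rewrite ?ltW.
Qed.

Lemma oint_FTC [f F c x] : 0 < c -> 0 < x ->
  (forall y, 0 < y -> is_derive y 1 F (f y)) ->
  (forall y, 0 < y -> {for y, continuous f}) ->
  oint f c x = F x - F c.
Proof.
move=> c0 x0 dF cf.
have pos u y : 0 < u -> u <= y -> 0 < y by move=> u0; exact: lt_le_trans.
have dF' u v : 0 < u -> forall y, u <= y <= v -> is_derive y 1 F (f y).
  by move=> u0 y /andP[uy _]; exact/dF/(pos u).
have cf' u v : 0 < u -> forall y, u <= y <= v -> {for y, continuous f}.
  by move=> u0 y /andP[uy _]; exact/cf/(pos u).
rewrite /oint; case: ltgtP => [cx|xc|<-].
- exact: Rintegral_itv_FTC cx (dF' _ _ c0) (cf' _ _ c0).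
- by rewrite (Rintegral_itv_FTC xc (dF' _ _ x0) (cf' _ _ x0)) opprB.
- by rewrite set_itv1 Rintegral_set1 subrr.
Qed.

Lemma eq_oint f F c x : 0 < c -> 0 < x -> (forall y, 0 < y -> f y = F y) ->
  oint f c x = oint F c x.
Proof.
move=> c0 x0 fF.
have eq_itv u v : 0 < u -> Rintegral lebesgue_measure `[u, v] f =
                           Rintegral lebesgue_measure `[u, v] F.
  move=> u0; apply: eq_Rintegral => y; rewrite inE /= in_itv /= => /andP[uy _].
  by apply: fF; exact: lt_le_trans uy.
by rewrite /oint; case: ifP => _; rewrite eq_itv.
Qed.

Lemma gt0_powRD x r s : 0 < x -> x `^ (r + s) = x `^ r * x `^ s.
Proof. by move=> x0; rewrite powRD // (gt_eqF x0) implybT. Qed.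

Lemma hpow1 g : hpow g 1 = 0.
Proof. by rewrite /hpow powR1 subrr mul0r ln1; case: eqP. Qed.

Lemma is_derive_hpow c [y] : 0 < y -> is_derive y 1 (hpow c) (y `^ (c - 1)).
Proof.
move=> y0; rewrite /hpow; case: eqP => [->|/eqP c0].
  by have dln := is_derive1_ln y0; apply: is_derive_eq; rewrite sub0r powR_inv1 ?ltW.
have dpow := is_derive1_powR c y0; apply: is_derive_eq.
by rewrite scaler0 add0r subr0 /GRing.scale /=; field.
Qed.

Lemma continuous_powR c [y] : 0 < y -> {for y, continuous (fun u => u `^ c)}.
Proof. by move=> y0; exact: is_derive_continuous (is_derive1_powR c y0). Qed.

Lemma h_intE g x : 0 < x -> h_int g x = hpow g x.
Proof.
move=> x0; rewrite /h_int (oint_FTC ltr01 x0 (is_derive_hpow g)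
  (continuous_powR (g - 1))).
by rewrite hpow1 subr0.
Qed.

Definition Hgr_formula g r x : R :=
  if r != 0 then r^-1 * (hpow (g + r) x - hpow g x)
  else if g != 0 then g^-1 * (x `^ g * ln x - hpow g x)
  else 2^-1 * (ln x * ln x).

Lemma Hgr_formula1 g r : Hgr_formula g r 1 = 0.
Proof.
by rewrite /Hgr_formula !hpow1 ln1 !(subrr, mulr0); case: ifP => // _; case: ifP.
Qed.

Lemma is_derive_Hgr_formula g r [y] : 0 < y ->
  is_derive y 1 (Hgr_formula g r) (y `^ (g - 1) * hpow r y).
Proof.
move=> y0; have yn0 : y != 0 by rewrite gt_eqF.
have := is_derive_hpow g y0; have := is_derive1_ln y0.
rewrite /Hgr_formula; have [->|r0] /= := eqVneq r 0.
- rewrite /hpow eqxx; have [->|g0] /= := eqVneq g 0.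
    move=> dln _; apply: is_derive_eq.
    by rewrite sub0r powR_inv1 ?ltW // /GRing.scale /=; field.
  move=> dln dh; have dpow := is_derive1_powR g y0; apply: is_derive_eq.
  rewrite powRB ?yn0 ?implybT // powRr1 ?ltW // /GRing.scale /=.
  by field; rewrite g0 yn0.
- move=> _ dh; have dh' := is_derive_hpow (g + r) y0; apply: is_derive_eq.
  rewrite /hpow (negbTE r0) /GRing.scale /=.
  have -> : y `^ (g + r - 1) = y `^ (g - 1) * y `^ r.
    by rewrite addrAC (gt0_powRD y (g - 1) r y0).
  by rewrite mulrC mulrA mulrBr mulr1.
Qed.

Lemma HgrE g r x : 0 < x -> Hgr g r x = Hgr_formula g r x.
Proof.
move=> x0; rewrite /Hgr (@eq_oint _ (fun v => v `^ (g - 1) * hpow r v)) //;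
  last by move=> y y0; rewrite -h_intE.
have cont y : 0 < y -> {for y, continuous (fun v => v `^ (g - 1) * hpow r v)}.
  move=> y0; have dh := is_derive_hpow r y0.
  have dpow := is_derive1_powR (g - 1) y0.
  exact: is_derive_continuous (is_deriveM dpow dh).
rewrite (oint_FTC ltr01 x0 (is_derive_Hgr_formula g r) cont).
by rewrite Hgr_formula1 subr0.
Qed.

End closed_forms.

Section cocycles.
Context {R : realType}.
Implicit Types (c g r x y : R).

Lemma hpowM c [x y] : 0 < x -> 0 < y -> hpow c (x * y) = hpow c x + x `^ c * hpow c y.
Proof.
move=> x0 y0; rewrite /hpow; case: eqP => [->|/eqP c0].
  by rewrite powRr0 mul1r lnM ?posrE.
by rewrite powRM ?ltW //; field.
Qed.

Lemma powR_hpow r [y] : 0 < y -> y `^ r = 1 + r * hpow r y.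
Proof.
move=> y0; rewrite /hpow; case: eqP => [->|/eqP r0]; last by field.
by rewrite powRr0 mul0r addr0.
Qed.

Lemma powRV c x : 0 < x -> x^-1 `^ c = (x `^ c)^-1.
Proof.
move=> x0; have xc : x `^ c != 0 by rewrite gt_eqF // powR_gt0.
apply: (mulIf xc); rewrite -powRM ?invr_ge0 ?ltW //.
by rewrite mulVf ?(gt_eqF x0) // mulVf // powR1.
Qed.

Lemma hpowV c x : 0 < x -> hpow c x^-1 = - ((x `^ c)^-1 * hpow c x).
Proof.
move=> x0; apply/eqP; rewrite -addr_eq0 -powRV //.
by rewrite -hpowM ?invr_gt0 // mulVf ?(gt_eqF x0) // hpow1.
Qed.

Lemma hpowN c x : 0 < x -> hpow (- c) x = (x `^ c)^-1 * hpow c x.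
Proof.
move=> x0; have xc : x `^ c != 0 by rewrite gt_eqF // powR_gt0.
rewrite /hpow oppr_eq0 powRN; case: eqP => [->|/eqP c0].
  by rewrite powRr0 invr1 mul1r.
by field; rewrite xc c0.
Qed.

Lemma hpow_gt0 c y : 1 < y -> 0 < hpow c y.
Proof.
move=> y1; have y0 : 0 < y by exact: lt_trans y1.
rewrite /hpow; case: eqP => [_|/eqP c0]; first exact: ln_gt0.
have powR_gt1 e : 0 < e -> 1 < y `^ e.
  move=> e0; have := @gt0_ltr_powR _ e e0 1 y.
  by rewrite powR1 !nnegrE ler01 ltW //; apply.
have [cn|cp] := ltP c 0.
- have -> : (y `^ c - 1) / c = (1 - y `^ c) / - c by rewrite invrN mulrN -mulNr opprB.
  rewrite divr_gt0 ?oppr_gt0 // subr_gt0 -[c]opprK powRN.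
  by rewrite invf_lt1 ?powR_gt0 ?powR_gt1 ?oppr_gt0.
- have c0' : 0 < c by rewrite lt_neqAle eq_sym c0.
  by rewrite divr_gt0 // subr_gt0 powR_gt1.
Qed.

Lemma Hgr_formulaM g r [x y] : 0 < x -> 0 < y ->
  Hgr_formula g r (x * y) = Hgr_formula g r x + x `^ g * hpow r x * hpow g y
                            + x `^ (g + r) * Hgr_formula g r y.
Proof.
move=> x0 y0; rewrite /Hgr_formula; have [->|r0] /= := eqVneq r 0.
- rewrite addr0; have [->|g0] /= := eqVneq g 0.
    by rewrite /hpow eqxx powRr0 lnM ?posrE //; field.
  rewrite !hpowM // powRM ?ltW // lnM ?posrE //.
  by rewrite /hpow (negbTE g0) eqxx; field.
- by rewrite !hpowM // gt0_powRD // (powR_hpow r x0); field.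
Qed.

Lemma hpowD_Hgr_formula g r y :
  hpow (g + r) y = hpow g y + r * Hgr_formula g r y.
Proof.
rewrite /Hgr_formula; have [->|r0] /= := eqVneq r 0; first by rewrite addr0 mul0r addr0.
by rewrite mulrA mulfV // mul1r [RHS]addrC subrK.
Qed.

Lemma Hgr_formula_det_neq0 g r [y] : 1 < y ->
  hpow g y * Hgr_formula g r (y * y) - hpow g (y * y) * Hgr_formula g r y != 0.
Proof.
move=> y1; have y0 : 0 < y by exact: lt_trans y1.
rewrite Hgr_formulaM // hpowM // gt0_powRD // (powR_hpow r y0).
have -> : hpow g y * (Hgr_formula g r y + y `^ g * hpow r y * hpow g y +
   y `^ g * (1 + r * hpow r y) * Hgr_formula g r y) -
   (hpow g y + y `^ g * hpow g y) * Hgr_formula g r y =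
   y `^ g * hpow g y * hpow r y * (hpow g y + r * Hgr_formula g r y) by ring.
by rewrite -hpowD_Hgr_formula gt_eqF // !mulr_gt0 ?powR_gt0 ?hpow_gt0.
Qed.

Lemma HgrV g r x : 0 < x ->
  x `^ r * Hgr g r x^-1 - hpow r x * hpow (- g) x = - ((x `^ g)^-1 * Hgr g r x).
Proof.
move=> x0; have xi0 : 0 < x^-1 by rewrite invr_gt0.
have xg : x `^ g != 0 by rewrite gt_eqF // powR_gt0.
have xr : x `^ r != 0 by rewrite gt_eqF // powR_gt0.
have := Hgr_formulaM g r x0 xi0; rewrite mulfV ?(gt_eqF x0) // Hgr_formula1.
move=> /eqP; rewrite eq_sym addr_eq0 => /eqP cocycle.
rewrite !HgrE //; set A := (X in X = _) in cocycle.
have -> : Hgr_formula g r x^-1 = - (A / x `^ (g + r)).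
  by rewrite cocycle gt0_powRD //; field; rewrite xg xr.
by rewrite /A hpowV // hpowN // gt0_powRD //; field; rewrite xg xr.
Qed.

End cocycles.

Section limits.
Context {R : realType} {T : Type} {F : set_system T} {FF : Filter F}.

Lemma cvg_linear_system2 [p q k1 k2 r1 r2 : T -> R] [h1 h2 K1 K2 c d : R] :
  (\forall t \near F, p t * h1 + q t * k1 t = r1 t) ->
  (\forall t \near F, p t * h2 + q t * k2 t = r2 t) ->
  k1 @ F --> K1 -> k2 @ F --> K2 ->
  r1 @ F --> c * h1 + d * K1 -> r2 @ F --> c * h2 + d * K2 ->
  h1 * K2 - h2 * K1 != 0 ->
  p @ F --> c /\ q @ F --> d.
Proof.
move=> E1 E2 ck1 ck2 cr1 cr2 det0.
pose det t := h1 * k2 t - h2 * k1 t.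
have cdet : det @ F --> h1 * K2 - h2 * K1 by apply: cvgB; apply: cvgMr.
have detN0 : \forall t \near F, det t != 0 by exact: cvgr_neq0 cdet det0.
split.
- apply: cvg_trans (near_eq_cvg (f := fun t => (r1 t * k2 t - r2 t * k1 t) / det t) _) _.
    by apply: filterS3 E1 E2 detN0 => t <- <- dt; rewrite /det in dt *; field.
  have -> : c = ((c * h1 + d * K1) * K2 - (c * h2 + d * K2) * K1) / (h1 * K2 - h2 * K1).
    by field.
  by apply: cvgM; [apply: cvgB; apply: cvgM | exact: cvgV].
- apply: cvg_trans (near_eq_cvg (f := fun t => (h1 * r2 t - h2 * r1 t) / det t) _) _.
    by apply: filterS3 E1 E2 detN0 => t <- <- dt; rewrite /det in dt *; field.
  have -> : d = (h1 * (c * h2 + d * K2) - h2 * (c * h1 + d * K1)) / (h1 * K2 - h2 * K1).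
    by field.
  by apply: cvgM; [apply: cvgB; apply: cvgMr | exact: cvgV].
Qed.

Lemma cvg_rate0 (u : T -> R) [A : T -> R] [L : R] : (\forall t \near F, A t != 0) ->
  (fun t => u t / A t) @ F --> L -> A @ F --> 0 -> u @ F --> 0.
Proof.
move=> AN0 uA A0; rewrite -(mul0r L).
apply: cvg_trans (near_eq_cvg (f := fun t => A t * (u t / A t)) _) (cvgM A0 uA).
by apply: filterS AN0 => t At; rewrite mulrC mulfVK.
Qed.

Lemma cvg_rate_comp {U : Type} {G : set_system U} {FG : Filter G}
    (u : T -> R) [A : T -> R] [m : U -> T] [c : U -> R] [L lam : R] :
  (\forall t \near F, A t != 0) -> (fun t => u t / A t) @ F --> L ->
  m @ G --> F -> (fun n => c n * A (m n)) @ G --> lam ->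
  (fun n => c n * u (m n)) @ G --> lam * L.
Proof.
move=> AN0 uA mF cA.
have uAm : (fun n => u (m n) / A (m n)) @ G --> L := cvg_comp _ _ mF uA.
have E : {near G, (fun n => c n * A (m n) * (u (m n) / A (m n))) =1
                  (fun n => c n * u (m n))}.
  near=> n; have Amn : A (m n) != 0 by near: n; exact: mF AN0.
  by rewrite -mulrA [A _ * _]mulrC mulfVK.
exact: cvg_trans (near_eq_cvg E) (cvgM cA uAm).
Unshelve. all: end_near.
Qed.

End limits.

Lemma cvgy_mulr {R : realType} [x : R] : 0 < x -> (fun s => s * x) @ +oo --> +oo.
Proof.
move=> x0; apply/cvgryPge => M.
by apply: filterS (nbhs_pinfty_ge (num_real (M / x))) => s; rewrite ler_pdivrMr.
Qed.

Section second_order_regular_variation.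
Context {R : realType} {gam rho : R} {a A b : R -> R}.
Hypothesis a_gt0 : forall s, 0 < s -> 0 < a s.
Hypothesis A_neq0 : \forall s \near +oo, A s != 0.
Hypothesis A_cvg0 : A @ +oo --> 0.

Let dev x s := (A s)^-1 * ((b (s * x) - b s) / a s - hpow gam x).

Hypothesis dev_cvg : forall x, 0 < x -> dev x @ +oo --> Hgr_formula gam rho x.

(* Comparing the expansions at s and at s x of b(s x z) - b(s) gives, for each z,
   one linear equation in the two unknown ratios below. *)
Lemma dev_scale [x z] : 0 < x -> 0 < z -> \forall s \near +oo,
  (a (s * x) / a s - x `^ gam) / A s * hpow gam z
  + a (s * x) / a s * (A (s * x) / A s) * dev z (s * x) = dev (x * z) s - dev x s.
Proof.
move=> x0 z0; have Asx := cvgy_mulr x0 _ A_neq0.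
near=> s; have s0 : 0 < s by near: s; exact: nbhs_pinfty_gt.
have As : A s != 0 by near: s.
have Asx0 : A (s * x) != 0 by near: s.
have as0 : a s != 0 by rewrite gt_eqF ?a_gt0.
have asx0 : a (s * x) != 0 by rewrite gt_eqF ?a_gt0 ?mulr_gt0.
rewrite /dev hpowM // (mulrA s x z).
by field; rewrite As Asx0 as0 asx0.
Unshelve. all: end_near.
Qed.

Lemma a_ratio_second_order [x] : 0 < x ->
  (fun s => (a (s * x) / a s - x `^ gam) / A s) @ +oo --> x `^ gam * hpow rho x.
Proof.
move=> x0; have two0 : (0 : R) < 2 by [].
have four0 : (0 : R) < 2 * 2 by rewrite mulr_gt0.
have dev_sx z : 0 < z -> (fun s => dev z (s * x)) @ +oo --> Hgr_formula gam rho z.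
  by move=> z0; exact: cvg_comp _ _ (cvgy_mulr x0) (dev_cvg _ z0).
have dev_diff z : 0 < z -> (fun s => dev (x * z) s - dev x s) @ +oo -->
    x `^ gam * hpow rho x * hpow gam z + x `^ (gam + rho) * Hgr_formula gam rho z.
  move=> z0; have -> : x `^ gam * hpow rho x * hpow gam z
      + x `^ (gam + rho) * Hgr_formula gam rho z =
      Hgr_formula gam rho (x * z) - Hgr_formula gam rho x.
    by rewrite Hgr_formulaM //; ring.
  by apply: cvgB; apply: dev_cvg; rewrite ?mulr_gt0.
have one_lt2 : (1 : R) < 2 by rewrite ltr1n.
have det0 := Hgr_formula_det_neq0 gam rho one_lt2.
by have [] := cvg_linear_system2 (dev_scale x0 two0) (dev_scale x0 four0)
  (dev_sx _ two0) (dev_sx _ four0) (dev_diff _ two0) (dev_diff _ four0) det0.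
Qed.

Lemma a_ratio_cvg [x] : 0 < x -> (fun s => a (s * x) / a s) @ +oo --> x `^ gam.
Proof.
move=> x0; apply/subr_cvg0.
exact: (cvg_rate0 (fun s => a (s * x) / a s - x `^ gam) A_neq0
  (a_ratio_second_order x0) A_cvg0).
Qed.

Lemma a_theta_rate [x] : 0 < x ->
  (fun s => (a s * x `^ gam / a (x * s) - 1) / A s) @ +oo --> - hpow rho x.
Proof.
move=> x0; have xg0 : x `^ gam != 0 by rewrite gt_eqF ?powR_gt0.
have -> : - hpow rho x = - (x `^ gam * hpow rho x) / x `^ gam.
  by rewrite mulNr mulrAC mulfV ?mul1r.
apply: cvg_trans (near_eq_cvg (f := fun s =>
    - ((a (s * x) / a s - x `^ gam) / A s) / (a (s * x) / a s)) _) _; last first.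
  by apply: cvgM; [apply: cvgN; exact: a_ratio_second_order | exact: cvgV (a_ratio_cvg x0)].
near=> s; have s0 : 0 < s by near: s; exact: nbhs_pinfty_gt.
have As : A s != 0 by near: s.
have as0 : a s != 0 by rewrite gt_eqF ?a_gt0.
have asx0 : a (s * x) != 0 by rewrite gt_eqF ?a_gt0 ?mulr_gt0.
by rewrite (mulrC x s); field; rewrite As as0 asx0.
Unshelve. all: end_near.
Qed.

Lemma b_theta_rate [x] : 0 < x ->
  (fun s => (b s + a s * hpow gam x - b (x * s)) / a (x * s) / A s) @ +oo -->
  - ((x `^ gam)^-1 * Hgr_formula gam rho x).
Proof.
move=> x0; have xg0 : x `^ gam != 0 by rewrite gt_eqF ?powR_gt0.
apply: cvg_trans (near_eq_cvg (f := fun s => - ((a (s * x) / a s)^-1 * dev x s)) _) _;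
  last by apply: cvgN; apply: cvgM; [exact: cvgV (a_ratio_cvg x0) | exact: dev_cvg].
near=> s; have s0 : 0 < s by near: s; exact: nbhs_pinfty_gt.
have As : A s != 0 by near: s.
have as0 : a s != 0 by rewrite gt_eqF ?a_gt0.
have asx0 : a (s * x) != 0 by rewrite gt_eqF ?a_gt0 ?mulr_gt0.
by rewrite /dev (mulrC x s); field; rewrite As as0 asx0.
Unshelve. all: end_near.
Qed.

End second_order_regular_variation.

Section convergence_of_types.
Context {R : realType} {T : Type} {F : set_system T} {FF : Filter F}.

Lemma cvg_nondecreasing_at (f : T -> R -> R) [G : R -> R] [zs : T -> R] [z : R] :
  (\forall t \near F, {homo f t : w1 w2 / w1 <= w2}) ->
  (forall w, (fun t => f t w) @ F --> G w) -> {for z, continuous G} ->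
  zs @ F --> z -> (fun t => f t (zs t)) @ F --> G z.
Proof.
move=> mono cf cG cz; apply/cvgrPdist_lt => e e0.
have e2 : 0 < e / 2 by rewrite divr_gt0.
have [d /= d0 Gd] : exists2 d : R, 0 < d & forall w, `|z - w| < d -> `|G z - G w| < e / 2.
  have /nbhs_ballP[d d0 Gd] : \forall w \near z, `|G z - G w| < e / 2.
    by move: cG => /cvgrPdist_lt; apply.
  by exists d => // w zw; apply: Gd; rewrite -ball_normE.
have d2 : 0 < d / 2 by rewrite divr_gt0.
have q1 : `|z - (z - d / 2)| < d by rewrite opprB addrC subrK gtr0_norm //; lra.
have q2 : `|z - (z + d / 2)| < d.
  by rewrite opprD addrA subrr add0r normrN gtr0_norm //; lra.
move: (Gd _ q1) (Gd _ q2); rewrite !ltr_distlC => /andP[? ?] /andP[? ?].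
near=> t.
have : `|z - zs t| < d / 2 by near: t; exact: cvgr_dist_lt.
have : `|G (z - d / 2) - f t (z - d / 2)| < e / 2 by near: t; exact: cvgr_dist_lt.
have : `|G (z + d / 2) - f t (z + d / 2)| < e / 2 by near: t; exact: cvgr_dist_lt.
have ft : {homo f t : w1 w2 / w1 <= w2} by near: t.
rewrite !ltr_distlC => /andP[? ?] /andP[? ?] /andP[zl zr].
have := ft _ _ (ltW zl); have := ft _ _ (ltW zr).
by move=> ? ?; apply/andP; split; lra.
Unshelve. all: end_near.
Qed.

(* [alpha t / alpha' t --> 1] forces [alpha' t != 0] eventually, since [x / 0 = 0]. *)
Lemma cvg_types (D : T -> R -> R) (G : R -> R) (alpha beta alpha' beta' : T -> R) (z : R) :
  (\forall t \near F, {homo D t : w1 w2 / w1 <= w2}) ->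
  (\forall t \near F, 0 < alpha t) ->
  (forall w, (fun t => D t (alpha t * w + beta t)) @ F --> G w) ->
  {for z, continuous G} ->
  (fun t => alpha t / alpha' t) @ F --> (1 : R) ->
  (fun t => (beta t - beta' t) / alpha' t) @ F --> (0 : R) ->
  (fun t => D t (alpha' t * z + beta' t)) @ F --> G z.
Proof.
move=> Dmono alpha_gt0 cD cG ratio1 shift0.
have ratioN0 := cvgr_neq0 _ ratio1 (oner_neq0 R).
pose zs t := (z - (beta t - beta' t) / alpha' t) / (alpha t / alpha' t).
have czs : zs @ F --> z.
  rewrite -[z]subr0 -[z - 0]divr1.
  by apply: cvgM; [exact: cvgB (cvg_cst z) shift0 | exact: cvgV (oner_neq0 R) ratio1].
apply: cvg_trans (near_eq_cvg (f := fun t => D t (alpha t * zs t + beta t)) _) _.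
  near=> t; have : alpha t / alpha' t != 0 by near: t; exact: ratioN0.
  have : 0 < alpha t by near: t; exact: alpha_gt0.
  have [->|a'0 a0 _] := eqVneq (alpha' t) 0; first by rewrite invr0 mulr0 eqxx.
  by congr (D t); rewrite /zs; field; rewrite a'0 gt_eqF.
apply: (cvg_nondecreasing_at (fun t w => D t (alpha t * w + beta t)) _ cD cG czs).
near=> t => w1 w2 w12.
have at0 : 0 < alpha t by near: t; exact: alpha_gt0.
have Dt : {homo D t : w1 w2 / w1 <= w2} by near: t; exact: Dmono.
by apply: Dt; rewrite lerD2r ler_pM2l.
Unshelve. all: end_near.
Qed.

End convergence_of_types.

Section GEV_continuity.
Context {R : realType}.
Implicit Types (g w y z : R).

Definition gev_pow g w : R :=
  if 0 < w then expR (- w `^ (- g^-1)) else if 0 < g then 0 else 1.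

Lemma GEV_gev_pow g z : g != 0 -> GEV g z = gev_pow g (1 + g * z).
Proof. by move=> g0; rewrite /GEV (negbTE g0). Qed.

Lemma gev_pow_near0 [g y] : g != 0 -> 0 < y ->
  `|(if 0 < g then 0 else 1) - expR (- y `^ (- g^-1))| <= y `^ `|g^-1|.
Proof.
move=> g0 y0; case: ifPn => [gp|gn].
- have gi : 0 < g^-1 by rewrite invr_gt0.
  rewrite (gtr0_norm gi) powRN sub0r normrN gtr0_norm ?expR_gt0 // expRN.
  have Y0 : 0 < y `^ g^-1 by rewrite powR_gt0.
  rewrite -[leRHS]invrK lef_pV2 ?posrE ?expR_gt0 ?invr_gt0 //.
  by have := expR_ge1Dx (y `^ g^-1)^-1; lra.
- have gi : g^-1 < 0 by rewrite invr_lt0 lt_neqAle g0 leNgt gn.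
  rewrite (ltr0_norm gi).
  have e1 : expR (- y `^ (- g^-1)) < 1 by rewrite expR_lt1 oppr_lt0 powR_gt0.
  rewrite ger0_norm; last by rewrite subr_ge0 ltW.
  by have := expR_ge1Dx (- y `^ (- g^-1)); lra.
Qed.

Lemma continuous_gev_pow g w : g != 0 -> {for w, continuous (gev_pow g)}.
Proof.
move=> g0; have [wn|wp|->] := ltgtP w 0.
- rewrite /prop_for /continuous_at {2}/gev_pow ltNge ltW //.
  apply: cvg_near_cst; near=> y; have yn : y < 0 by near: y; exact: lt_nbhsl.
  by rewrite /gev_pow ltNge ltW.
- have cexp : {for w, continuous (fun y => expR (- y `^ (- g^-1)))}.
    apply: continuous_comp; last exact: continuous_expR.
    exact: cvgN (continuous_powR _ wp).
  rewrite /prop_for /continuous_at {2}/gev_pow wp.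
  apply: cvg_trans cexp; apply: near_eq_cvg; near=> y.
  have yp : 0 < y by near: y; exact: lt_nbhsr.
  by rewrite /gev_pow yp.
- rewrite /prop_for /continuous_at {2}/gev_pow ltxx.
  apply/cvgrPdist_lt => e e0.
  have q0 : 0 < `|g^-1| by rewrite normr_gt0 invr_eq0.
  move: (powR_cvg0 q0) => /cvgr_lt /(_ e e0).
  rewrite near_withinE; apply: filterS => y ye.
  rewrite /gev_pow; have [yp|_] := ltP 0 y; last by rewrite subrr normr0.
  exact: le_lt_trans (gev_pow_near0 g0 yp) (ye yp).
Unshelve. all: end_near.
Qed.

Lemma continuous_GEV g z : {for z, continuous (GEV g)}.
Proof.
have [->|g0] := eqVneq g 0.
  rewrite /prop_for /continuous_at /GEV eqxx.
  apply: continuous_comp; last exact: continuous_expR.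
  apply: cvgN; apply: continuous_comp; last exact: continuous_expR.
  exact: cvgN cvg_id.
have -> : GEV g = (fun z => gev_pow g (1 + g * z)).
  by apply/funext => y; rewrite GEV_gev_pow.
apply: continuous_comp; last exact: continuous_gev_pow.
by apply: cvgD; [exact: cvg_cst | apply: cvgMr; exact: cvg_id].
Qed.

End GEV_continuity.

Section maxima.
Context {R : realType} {d : measure_display} {T : measurableType d}.

Lemma measurable_Mmax (X : nat -> T -> R) N :
  (forall t, measurable_fun setT (X t)) -> measurable_fun setT (Mmax X N).
Proof.
move=> mX; rewrite /Mmax; elim: (index_iota 1 N.+1) => [|i s IHs].
  by under eq_fun do rewrite big_nil; exact: mX.
by under eq_fun do rewrite big_cons; exact: measurable_realfun.measurable_maxr.
Qed.

Lemma nondecreasing_prob_le (P : probability T R) [f : T -> R] :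
  measurable_fun setT f -> {homo (fun t => fine (P [set w | f w <= t])) : s u / s <= u}.
Proof.
move=> mf s u su.
have mle t : measurable [set w | f w <= t].
  have := mf measurableT _ (measurable_itv `]-oo, t]); rewrite setTI.
  by congr measurable; apply/seteqP; split => w /=; rewrite in_itv.
apply: fine_le; rewrite ?fin_num_measure //.
by apply: le_measure; rewrite ?inE // => w /= /le_trans; apply.
Qed.

End maxima.

Theorem lemma2p2 (R : realType) (d : measure_display) (T : measurableType d)
  (P : probability T R) (X : nat -> T -> R)
  (gam rho theta lam : R) (a A : R -> R) (m k : nat -> nat) :
  (forall t, measurable_fun setT (X t)) ->
  strictly_stationary P X ->
  continuous (stat_cdf P X) ->
  rho <= 0 -> 0 < theta <= 1 ->
  let b := fun t : R => geninv (stat_cdf P X) (expR (- t^-1)) in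
  (forall s, 0 < s -> 0 < a s) ->
  ((\forall s \near +oo, 0 < A s) \/ (\forall s \near +oo, A s < 0)) ->
  A @ +oo --> 0 ->
  (forall x, 0 < x ->
     (fun s => (A s)^-1 * ((b (s * x) - b s) / a s - h_int gam x)) @ +oo
       --> Hgr gam rho x) ->
  (fun n => (m n)%:R : R) @ \oo --> +oo ->
  (fun n => (k n)%:R : R) @ \oo --> +oo ->
  (fun n => Num.sqrt (k n)%:R * A (m n)%:R) @ \oo --> lam ->
  let a_th := fun t : R => a t * theta `^ gam in
  let b_th := fun t : R => b t + a t * hpow gam theta in
  [/\ (fun n => Num.sqrt (k n)%:R *
          (a_th (m n)%:R / a (theta * (m n)%:R) - 1)) @ \oo
        --> - lam * hpow rho theta,
      (fun n => Num.sqrt (k n)%:R *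
          ((b_th (m n)%:R - b (theta * (m n)%:R)) / a (theta * (m n)%:R)))
        @ \oo --> lam * theta `^ rho * Hgr gam rho theta^-1
                  + lam * hpow rho theta * (- hpow (- gam) theta)
    & (forall z, (fun N : nat => fine (P [set w | Mmax X N w <= a_th N%:R * z + b_th N%:R]))
                   @ \oo --> GEV gam z) ->
      forall z, (fun n => fine (P [set w | Mmax X (m n) w <=
                     a (theta * (m n)%:R) * z + b (theta * (m n)%:R)]))
                  @ \oo --> GEV gam z].
Proof.
move=> mX _ _ _ /andP[th0 _] b a_gt0 A_sign A_cvg0 b_2RV m_oo _ rate a_th b_th.
have A_neq0 : \forall s \near +oo, A s != 0.
  by case: A_sign => A_sign; apply: filterS A_sign => s; [move/gt_eqF->|move/lt_eqF->].
have dev_cvg x : 0 < x -> (fun s => (A s)^-1 * ((b (s * x) - b s) / a s - hpow gam x))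
    @ +oo --> Hgr_formula gam rho x.
  by move=> x0; rewrite -h_intE // -HgrE //; exact: b_2RV.
have a_rate := a_theta_rate a_gt0 A_neq0 A_cvg0 dev_cvg th0.
have b_rate := b_theta_rate a_gt0 A_neq0 A_cvg0 dev_cvg th0.
split.
- rewrite mulNr -mulrN.
  exact: (cvg_rate_comp (fun s => a_th s / a (theta * s) - 1) A_neq0 a_rate m_oo rate).
- have -> : lam * theta `^ rho * Hgr gam rho theta^-1
      + lam * hpow rho theta * (- hpow (- gam) theta) =
      lam * - ((theta `^ gam)^-1 * Hgr_formula gam rho theta).
    by rewrite -HgrE // -HgrV //; ring.
  exact: (cvg_rate_comp (fun s => (b_th s - b (theta * s)) / a (theta * s))
    A_neq0 b_rate m_oo rate).
move=> Hz z; have m_nat : m @ \oo --> \oo by apply/(@cvgrnyP R).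
have m_gt0 : \forall n \near \oo, 0 < ((m n)%:R : R) := m_oo _ (nbhs_pinfty_gt (num_real 0)).
apply: (cvg_types (fun n t => fine (P [set w | Mmax X (m n) w <= t])) _
  (fun n => a_th (m n)%:R) (fun n => b_th (m n)%:R)).
- by apply: nearW => n; exact: (nondecreasing_prob_le P (measurable_Mmax _ (m n) mX)).
- by apply: filterS m_gt0 => n mn0; rewrite mulr_gt0 ?a_gt0 ?powR_gt0.
- by move=> w; exact: cvg_comp _ _ m_nat (Hz w).
- exact: continuous_GEV.
- apply/subr_cvg0.
  exact: cvg_comp _ _ m_oo
    (cvg_rate0 (fun s => a_th s / a (theta * s) - 1) A_neq0 a_rate A_cvg0).
- exact: cvg_comp _ _ m_oo
    (cvg_rate0 (fun s => (b_th s - b (theta * s)) / a (theta * s)) A_neq0 b_rate A_cvg0).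
Qed.
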